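(* Let $\mathcal{C}$ and $\mathcal{C}'$ be semigroupal categories and let $(F,J)\colon \mathcal{C}\to\mathcal{C}'$ be a semigroupal equivalence. Then for any left (respectively right, respectively two-sided) ideal $\mathcal{I}$ of $\mathcal{C}$, the subcategory $\overline{F(\mathcal{I})}$ is a left (respectively right, respectively two-sided) ideal of $\mathcal{C}'$. Moreover, $F$ restricts to an equivalence of categories between $\mathcal{I}$ and $\overline{F(\mathcal{I})}$.
   Context: A semigroupal category is a category $\mathcal{C}$ with a tensor product functor $\otimes\colon\mathcal{C}\times\mathcal{C}\to\mathcal{C}$ and an associator natural isomorphism $a$ satisfying the pentagon axiom (no unit object is required); throughout, semigroupal categories may be taken strict. A semigroupal functor is a pair $(F,J)$ where $F\colon\mathcal{C}\to\mathcal{C}'$ is a functor and $J\colon F(-)\otimes' F(-)\Rightarrow F(-\otimes -)$ is a natural isomorphism compatible with the associators (hexagon axiom). A semigroupal equivalence is a semigroupal functor $(F,J)$ with $F$ an equivalence of categories (so $F$ is full and $F(\mathcal{I})$ is a subcategory). A subcategory $\mathcal{D}$ of $\mathcal{C}$ is closed under isomorphisms if for every object $X$ of $\mathcal{D}$ and every isomorphism $\varphi\colon X\to X'$ in $\mathcal{C}$, both $X'$ and $\varphi$ lie in $\mathcal{D}$; the isomorphism closure $\overline{\mathcal{D}}$ is the smallest subcategory of $\mathcal{C}$ containing $\mathcal{D}$ and closed under isomorphisms (its objects are those isomorphic to objects of $\mathcal{D}$, and a morphism $\varphi'\colon X'\to Y'$ lies in $\overline{\mathcal{D}}$ iff there are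 objects $X,Y$ of $\mathcal{D}$, isomorphisms $\mu\colon X\to X'$, $\nu\colon Y\to Y'$ in $\mathcal{C}$ and a morphism $\varphi\colon X\to Y$ in $\mathcal{D}$ with $\nu\circ\varphi=\varphi'\circ\mu$). A left (resp. right) ideal of a semigroupal category $\mathcal{C}$ is a subcategory $\mathcal{I}$ closed under isomorphisms such that $Y\otimes X$ (resp. $X\otimes Y$) is an object of $\mathcal{I}$ for all objects $X$ of $\mathcal{I}$ and $Y$ of $\mathcal{C}$; an ideal is a subcategory that is both a left and a right ideal. *)

From Stdlib Require Import ProofIrrelevance.

Set Implicit Arguments.
Unset Strict Implicit.

Record Category := {
  Ob :> Type;
  Hom : Ob -> Ob -> Type;
  idm : forall X, Hom X X;
  comp : forall X Y Z, Hom Y Z -> Hom X Y -> Hom X Z;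
  comp_id_l : forall X Y (f : Hom X Y), comp (idm Y) f = f;
  comp_id_r : forall X Y (f : Hom X Y), comp f (idm X) = f;
  comp_assoc : forall X Y Z W (f : Hom X Y) (g : Hom Y Z) (h : Hom Z W),
      comp h (comp g f) = comp (comp h g) f
}.
Arguments Hom {c} X Y.
Arguments idm {c} X.
Arguments comp {c X Y Z} g f.

Definition is_iso {C : Category} {X Y : C} (f : Hom X Y) : Prop :=
  exists g : Hom Y X, comp g f = idm X /\ comp f g = idm Y.

Record Functor (C D : Category) := {
  fob :> C -> D;
  fmap : forall X Y : C, Hom X Y -> Hom (fob X) (fob Y);
  fmap_id : forall X, fmap (idm X) = idm (fob X);
  fmap_comp : forall X Y Z (f : Hom X Y) (g : Hom Y Z),
      fmap (comp g f) = comp (fmap g) (fmap f)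
}.
Arguments fmap {C D} _ {X Y} _.

Definition IsEquivalence {C D : Category} (F : Functor C D) : Prop :=
  exists G : Functor D C,
    (exists eta : forall X : C, Hom X (G (F X)),
        (forall X, is_iso (eta X)) /\
        (forall X Y (f : Hom X Y),
            comp (eta Y) f = comp (fmap G (fmap F f)) (eta X))) /\
    (exists eps : forall Y : D, Hom (F (G Y)) Y,
        (forall Y, is_iso (eps Y)) /\
        (forall X Y (g : Hom X Y),
            comp (eps Y) (fmap F (fmap G g)) = comp g (eps X))).

Record SemigroupalCategory := {
  sc_cat :> Category;
  tens : sc_cat -> sc_cat -> sc_cat;
  tensm : forall X X' Y Y' : sc_cat,
      Hom X X' -> Hom Y Y' -> Hom (tens X Y) (tens X' Y');
  tensm_id : forall X Y, tensm (idm X) (idm Y) = idm (tens X Y);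
  tensm_comp : forall X1 X2 X3 Y1 Y2 Y3 (f : Hom X1 X2) (f' : Hom X2 X3)
      (g : Hom Y1 Y2) (g' : Hom Y2 Y3),
      tensm (comp f' f) (comp g' g) = comp (tensm f' g') (tensm f g);
  assoc : forall X Y Z : sc_cat, Hom (tens (tens X Y) Z) (tens X (tens Y Z));
  assoc_iso : forall X Y Z, is_iso (assoc X Y Z);
  assoc_nat : forall X X' Y Y' Z Z' (f : Hom X X') (g : Hom Y Y') (h : Hom Z Z'),
      comp (assoc X' Y' Z') (tensm (tensm f g) h)
      = comp (tensm f (tensm g h)) (assoc X Y Z);
  pentagon : forall X Y Z W : sc_cat,
      comp (assoc X Y (tens Z W)) (assoc (tens X Y) Z W)
      = comp (tensm (idm X) (assoc Y Z W))
          (comp (assoc X (tens Y Z) W) (tensm (assoc X Y Z) (idm W)))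
}.
Arguments tens {s} X Y.
Arguments tensm {s X X' Y Y'} f g.
Arguments assoc {s} X Y Z.

Record SemigroupalFunctor (C C' : SemigroupalCategory) := {
  sf_fun :> Functor C C';
  sf_J : forall X Y : C, Hom (tens (sf_fun X) (sf_fun Y)) (sf_fun (tens X Y));
  sf_J_iso : forall X Y, is_iso (sf_J X Y);
  sf_J_nat : forall X X' Y Y' (f : Hom X X') (g : Hom Y Y'),
      comp (sf_J X' Y') (tensm (fmap sf_fun f) (fmap sf_fun g))
      = comp (fmap sf_fun (tensm f g)) (sf_J X Y);
  sf_hexagon : forall X Y Z : C,
      comp (fmap sf_fun (assoc X Y Z))
           (comp (sf_J (tens X Y) Z) (tensm (sf_J X Y) (idm (sf_fun Z))))
      = comp (sf_J X (tens Y Z))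
           (comp (tensm (idm (sf_fun X)) (sf_J Y Z))
                 (assoc (sf_fun X) (sf_fun Y) (sf_fun Z)))
}.

Definition IsSemigroupalEquivalence {C C'} (F : SemigroupalFunctor C C') : Prop :=
  IsEquivalence F.

Record Subcategory (C : Category) := {
  sob : C -> Prop;
  shom : forall X Y : C, Hom X Y -> Prop;
  shom_ob : forall X Y (f : Hom X Y), shom f -> sob X /\ sob Y;
  shom_id : forall X, sob X -> shom (idm X);
  shom_comp : forall X Y Z (f : Hom X Y) (g : Hom Y Z),
      shom f -> shom g -> shom (comp g f)
}.
Arguments sob {C} s X.
Arguments shom {C} s {X Y} f.

Definition closed_under_isos {C : Category} (D : Subcategory C) : Prop :=
  forall (X X' : C) (phi : Hom X X'), sob D X -> is_iso phi ->
    sob D X' /\ shom D phi.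

Definition IsLeftIdeal {C : SemigroupalCategory} (I : Subcategory C) : Prop :=
  closed_under_isos I /\ forall X Y : C, sob I X -> sob I (tens Y X).

Definition IsRightIdeal {C : SemigroupalCategory} (I : Subcategory C) : Prop :=
  closed_under_isos I /\ forall X Y : C, sob I X -> sob I (tens X Y).

Definition IsIdeal {C : SemigroupalCategory} (I : Subcategory C) : Prop :=
  IsLeftIdeal I /\ IsRightIdeal I.

Inductive IdealKind := LeftK | RightK | TwoSidedK.

Definition is_ideal_of_kind (k : IdealKind) {C : SemigroupalCategory}
  (I : Subcategory C) : Prop :=
  match k with
  | LeftK => IsLeftIdeal I
  | RightK => IsRightIdeal I
  | TwoSidedK => IsIdeal I
  end.

Section SubCat.
Variables (C : Category) (D : Subcategory C).

Definition sc_Ob := { X : C | sob D X }.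
Definition sc_Hom (X Y : sc_Ob) := { f : Hom (proj1_sig X) (proj1_sig Y) | shom D f }.
Definition sc_id (X : sc_Ob) : sc_Hom X X :=
  exist _ (idm (proj1_sig X)) (shom_id (proj2_sig X)).
Definition sc_comp (X Y Z : sc_Ob) (g : sc_Hom Y Z) (f : sc_Hom X Y) : sc_Hom X Z :=
  exist _ (comp (proj1_sig g) (proj1_sig f)) (shom_comp (proj2_sig f) (proj2_sig g)).

Lemma sc_eq (X Y : sc_Ob) (f g : sc_Hom X Y) : proj1_sig f = proj1_sig g -> f = g.
Proof.
  destruct f as [f p], g as [g q]; simpl; intros ->.
  f_equal; apply proof_irrelevance.
Qed.

Definition SubCat : Category.
Proof.
  refine {| Ob := sc_Ob; Hom := sc_Hom; idm := sc_id; comp := sc_comp |};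
  intros; apply sc_eq; simpl.
  - apply comp_id_l.
  - apply comp_id_r.
  - apply comp_assoc.
Defined.
End SubCat.

Definition maps_into {C D : Category} (F : Functor C D)
  (I : Subcategory C) (S : Subcategory D) : Prop :=
  (forall X, sob I X -> sob S (F X)) /\
  (forall X Y (f : Hom X Y), shom I f -> shom S (fmap F f)).

Section Restrict.
Variables (C D : Category) (F : Functor C D) (I : Subcategory C) (S : Subcategory D)
          (H : maps_into F I S).

Definition restr_ob (X : SubCat I) : SubCat S :=
  exist _ (F (proj1_sig X)) (proj1 H _ (proj2_sig X)).
Definition restr_map (X Y : SubCat I) (f : Hom X Y) : Hom (restr_ob X) (restr_ob Y) :=
  exist _ (fmap F (proj1_sig f)) (proj2 H _ _ _ (proj2_sig f)).

Definition restrict : Functor (SubCat I) (SubCat S).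
Proof.
  refine {| fob := restr_ob; fmap := restr_map |}; intros; apply sc_eq; simpl.
  - apply fmap_id.
  - apply fmap_comp.
Defined.
End Restrict.

(* The isomorphism closure of the image F(I) of a subcategory I, written out
   explicitly (objects isomorphic to some F X with X in I; morphisms phi'
   for which there are isos mu : F X -> X', nu : F Y -> Y' and f : X -> Y in I
   with nu o F f = phi' o mu). *)
Definition closure_image_ob {C D : Category} (F : Functor C D)
  (I : Subcategory C) (X' : D) : Prop :=
  exists (X : C) (mu : Hom (F X) X'), sob I X /\ is_iso mu.

Definition closure_image_hom {C D : Category} (F : Functor C D)
  (I : Subcategory C) (X' Y' : D) (phi' : Hom X' Y') : Prop :=
  exists (X Y : C) (mu : Hom (F X) X') (nu : Hom (F Y) Y') (f : Hom X Y),
    sob I X /\ sob I Y /\ is_iso mu /\ is_iso nu /\ shom I f /\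
    comp nu (fmap F f) = comp phi' mu.


(* A quasi-inverse G of F makes F full on isomorphisms and every object of C'
   isomorphic to some F Y.  Fullness on isomorphisms glues two composable
   morphisms of the isomorphism closure of F(I) through a lift of the middle
   isomorphism, so the closure is a subcategory; it absorbs tensor factors
   because Y' (x) F X ~ F Y (x) F X ~ F (Y (x) X) via J.  As I is closed under
   isomorphisms, G maps the closure back into I, and the unit and counit of the
   equivalence restrict to the two subcategories. *)

Section Isomorphisms.
Context {C : Category}.

Lemma iso_id (X : C) : is_iso (idm X).
Proof. exists (idm X); split; apply comp_id_l. Qed.

Lemma iso_comp {X Y Z : C} (f : Hom X Y) (g : Hom Y Z) :
  is_iso f -> is_iso g -> is_iso (comp g f).
Proof.
  intros [f' [Hf1 Hf2]] [g' [Hg1 Hg2]]. exists (comp f' g'). split.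
  - rewrite <- comp_assoc, (comp_assoc f g g'), Hg1, comp_id_l. exact Hf1.
  - rewrite <- comp_assoc, (comp_assoc g' f' f), Hf2, comp_id_l. exact Hg2.
Qed.

Lemma iso_inverse {X Y : C} (f : Hom X Y) (g : Hom Y X) :
  comp g f = idm X -> comp f g = idm Y -> is_iso g.
Proof. intros Hgf Hfg. exists f. split; assumption. Qed.

Lemma iso_cancel_r {X Y Z : C} (e : Hom X Y) (g g' : Hom Y Z) :
  is_iso e -> comp g e = comp g' e -> g = g'.
Proof.
  intros [e' [_ He]] H.
  rewrite <- (comp_id_r g), <- (comp_id_r g'), <- He, !comp_assoc, H. reflexivity.
Qed.
End Isomorphisms.

Lemma fmap_iso {C D : Category} (F : Functor C D) {X Y : C} (f : Hom X Y) :
  is_iso f -> is_iso (fmap F f).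
Proof.
  intros [g [H1 H2]]. exists (fmap F g). split; rewrite <- fmap_comp.
  - rewrite H1. apply fmap_id.
  - rewrite H2. apply fmap_id.
Qed.

Lemma tensm_iso {C : SemigroupalCategory} {X X' Y Y' : C}
  (f : Hom X X') (g : Hom Y Y') :
  is_iso f -> is_iso g -> is_iso (tensm f g).
Proof.
  intros [f' [H1 H2]] [g' [H3 H4]]. exists (tensm f' g'). split; rewrite <- tensm_comp.
  - rewrite H1, H3. apply tensm_id.
  - rewrite H2, H4. apply tensm_id.
Qed.

Section IsoClosedSubcategory.
Context {C : Category} {D : Subcategory C} (HD : closed_under_isos D).

Lemma iso_sob {X Y : C} (f : Hom X Y) : sob D X -> is_iso f -> sob D Y.
Proof. intros HX Hf. exact (proj1 (HD X Y f HX Hf)). Qed.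

Lemma iso_shom_src {X Y : C} (f : Hom X Y) : sob D X -> is_iso f -> shom D f.
Proof. intros HX Hf. exact (proj2 (HD X Y f HX Hf)). Qed.

Lemma iso_shom_tgt {X Y : C} (f : Hom X Y) : sob D Y -> is_iso f -> shom D f.
Proof.
  intros HY [g [Hgf Hfg]].
  apply iso_shom_src; [|exists g; split; assumption].
  exact (iso_sob g HY (iso_inverse f g Hgf Hfg)).
Qed.

Lemma shom_conj {X' X Y Y' : C} (a : Hom X' X) (f : Hom X Y) (b : Hom Y Y') :
  shom D f -> is_iso a -> is_iso b -> shom D (comp b (comp f a)).
Proof.
  intros Hf Ha Hb. destruct (shom_ob Hf) as [HX HY].
  apply shom_comp; [apply shom_comp|].
  - exact (iso_shom_tgt a HX Ha).
  - exact Hf.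
  - exact (iso_shom_src b HY Hb).
Qed.

Lemma subcat_iso (X Y : SubCat D) (f : Hom X Y) : is_iso (proj1_sig f) -> is_iso f.
Proof.
  destruct X as [x hx], Y as [y hy], f as [f hf]; simpl.
  intros [g [H1 H2]].
  exists (exist _ g (iso_shom_src g hy (iso_inverse f g H1 H2))
          : @Hom (SubCat D) (exist _ y hy) (exist _ x hx)).
  split; apply sc_eq; assumption.
Qed.
End IsoClosedSubcategory.

Section QuasiInverse.
Context {C D : Category} {F : Functor C D} {G : Functor D C}
  {eta : forall X : C, Hom X (G (F X))} {eps : forall Y : D, Hom (F (G Y)) Y}.
Hypothesis eta_iso : forall X, is_iso (eta X).
Hypothesis eta_nat : forall X Y (f : Hom X Y),
  comp (eta Y) f = comp (fmap G (fmap F f)) (eta X).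
Hypothesis eps_iso : forall Y, is_iso (eps Y).
Hypothesis eps_nat : forall X Y (g : Hom X Y),
  comp (eps Y) (fmap F (fmap G g)) = comp g (eps X).

Lemma quasi_inverse_faithful {X Y : D} (g g' : Hom X Y) :
  fmap G g = fmap G g' -> g = g'.
Proof.
  intro H. apply (iso_cancel_r (eps X)); [apply eps_iso|].
  rewrite <- !eps_nat, H. reflexivity.
Qed.

Lemma fmap_iso_lift {X Y : C} (u : Hom (F X) (F Y)) :
  is_iso u -> exists h, is_iso h /\ fmap F h = u.
Proof.
  intro Hu. destruct (eta_iso Y) as [eta_inv [Heta1 Heta2]].
  exists (comp eta_inv (comp (fmap G u) (eta X))). split.
  - apply iso_comp; [apply iso_comp; [apply eta_iso | apply fmap_iso, Hu]|].
    exact (iso_inverse _ _ Heta1 Heta2).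
  - apply quasi_inverse_faithful, (iso_cancel_r (eta X)); [apply eta_iso|].
    rewrite <- eta_nat, comp_assoc, Heta2, comp_id_l. reflexivity.
Qed.

Context {I : Subcategory C}.
Hypothesis HI : closed_under_isos I.

Lemma closure_image_hom_ob {X' Y' : D} (phi : Hom X' Y') :
  closure_image_hom F I phi -> closure_image_ob F I X' /\ closure_image_ob F I Y'.
Proof.
  intros (X & Y & mu & nu & _ & HX & HY & Hmu & Hnu & _).
  split; [exists X, mu | exists Y, nu]; split; assumption.
Qed.

Lemma closure_image_hom_id (X' : D) :
  closure_image_ob F I X' -> closure_image_hom F I (idm X').
Proof.
  intros (X & mu & HX & Hmu). exists X, X, mu, mu, (idm X).
  repeat split; try assumption.
  - apply shom_id, HX.
  - rewrite fmap_id, comp_id_r, comp_id_l. reflexivity.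
Qed.

Lemma closure_image_hom_comp {X' Y' Z' : D} (phi : Hom X' Y') (psi : Hom Y' Z') :
  closure_image_hom F I phi -> closure_image_hom F I psi ->
  closure_image_hom F I (comp psi phi).
Proof.
  intros (X & Y1 & mu & nu1 & f & HX & HY1 & Hmu & Hnu1 & Hf & Ephi)
         (Y2 & Z & mu2 & nu & g & HY2 & HZ & [mu2_inv [Hmu2 Hmu2']] & Hnu & Hg & Epsi).
  destruct (fmap_iso_lift (comp mu2_inv nu1)) as [h [Hh Eh]].
  { apply iso_comp; [exact Hnu1 | exact (iso_inverse _ _ Hmu2 Hmu2')]. }
  exists X, Z, mu, nu, (comp g (comp h f)).
  repeat split; try assumption.
  - apply shom_comp; [apply shom_comp|]; try assumption.
    exact (iso_shom_src HI h HY1 Hh).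
  - rewrite !fmap_comp, Eh, !comp_assoc, Epsi, <- !comp_assoc, (comp_assoc _ mu2_inv),
      Hmu2', comp_id_l, Ephi.
    reflexivity.
Qed.

Definition closure_image : Subcategory D :=
  {| sob := closure_image_ob F I;
     shom := fun X' Y' phi => closure_image_hom F I phi;
     shom_ob := @closure_image_hom_ob;
     shom_id := closure_image_hom_id;
     shom_comp := @closure_image_hom_comp |}.

Lemma closure_image_closed_under_isos : closed_under_isos closure_image.
Proof.
  intros X' X'' phi (X & mu & HX & Hmu) Hphi.
  assert (Hphimu : is_iso (comp phi mu)) by (apply iso_comp; assumption).
  split.
  - exists X, (comp phi mu). split; assumption.
  - exists X, X, mu, (comp phi mu), (idm X).
    repeat split; try assumption.
    + apply shom_id, HX.
    + rewrite fmap_id, comp_id_r. reflexivity.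
Qed.

Lemma maps_into_closure_image : maps_into F I closure_image.
Proof.
  split.
  - intros X HX. exists X, (idm (F X)). split; [exact HX | apply iso_id].
  - intros X Y f Hf. destruct (shom_ob Hf) as [HX HY].
    exists X, Y, (idm _), (idm _), f.
    repeat split; try assumption; try apply iso_id.
    rewrite comp_id_l, comp_id_r. reflexivity.
Qed.

Lemma fmap_fmap_shom {X Y : C} (f : Hom X Y) :
  shom I f -> shom I (fmap G (fmap F f)).
Proof.
  intro Hf. destruct (eta_iso X) as [eta_inv [Heta1 Heta2]].
  replace (fmap G (fmap F f)) with (comp (eta Y) (comp f eta_inv)).
  - apply shom_conj; [exact HI | exact Hf | exact (iso_inverse _ _ Heta1 Heta2) | apply eta_iso].
  - rewrite comp_assoc, eta_nat, <- comp_assoc, Heta2, comp_id_r. reflexivity.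
Qed.

Lemma maps_into_quasi_inverse : maps_into G closure_image I.
Proof.
  split.
  - intros Y' (X & mu & HX & Hmu).
    apply (iso_sob HI (comp (fmap G mu) (eta X)) HX).
    apply iso_comp; [apply eta_iso | apply fmap_iso, Hmu].
  - intros X' Y' phi (X & Y & mu & nu & f & _ & _ & [mu_inv [Hmu1 Hmu2]] & Hnu & Hf & E).
    replace phi with (comp nu (comp (fmap F f) mu_inv)).
    + rewrite !fmap_comp.
      apply shom_conj; [exact HI | apply fmap_fmap_shom, Hf | | apply fmap_iso, Hnu].
      apply fmap_iso. exact (iso_inverse _ _ Hmu1 Hmu2).
    + rewrite comp_assoc, E, <- comp_assoc, Hmu2, comp_id_r. reflexivity.
Qed.

Lemma restrict_closure_image_equivalence (H : maps_into F I closure_image) :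
  IsEquivalence (restrict H).
Proof.
  exists (restrict maps_into_quasi_inverse). split.
  - exists (fun X : SubCat I =>
      exist _ (eta (proj1_sig X)) (iso_shom_src HI _ (proj2_sig X) (eta_iso _))
      : Hom X (restrict maps_into_quasi_inverse (restrict H X))).
    split.
    + intro X. apply (subcat_iso HI), eta_iso.
    + intros X Y f. apply sc_eq, eta_nat.
  - exists (fun Y : SubCat closure_image =>
      exist _ (eps (proj1_sig Y))
        (iso_shom_tgt closure_image_closed_under_isos _ (proj2_sig Y) (eps_iso _))
      : Hom (restrict H (restrict maps_into_quasi_inverse Y)) Y).
    split.
    + intro Y. apply (subcat_iso closure_image_closed_under_isos), eps_iso.
    + intros X Y g. apply sc_eq, eps_nat.
Qed.
End QuasiInverse.

Lemma closure_image_equivalence {C D : Category} {F : Functor C D}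
  (HF : IsEquivalence F) {I : Subcategory C} (HI : closed_under_isos I) :
  exists S : Subcategory D,
    (forall X', sob S X' <-> closure_image_ob F I X') /\
    (forall X' Y' (phi' : Hom X' Y'), shom S phi' <-> closure_image_hom F I phi') /\
    closed_under_isos S /\
    exists H : maps_into F I S, IsEquivalence (restrict H).
Proof.
  destruct HF as [G [[eta [eta_iso eta_nat]] [eps [eps_iso eps_nat]]]].
  exists (closure_image eta_iso eta_nat eps_iso eps_nat HI).
  split; [intro; apply iff_refl|]. split; [intros; apply iff_refl|]. split.
  - apply closure_image_closed_under_isos.
  - exists (maps_into_closure_image eta_iso eta_nat eps_iso eps_nat HI).
    apply restrict_closure_image_equivalence.
Qed.

Definition essentially_surjective {C D : Category} (F : Functor C D) : Prop :=
  forall Y : D, exists (X : C) (e : Hom (F X) Y), is_iso e.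

Lemma equivalence_essentially_surjective {C D : Category} {F : Functor C D} :
  IsEquivalence F -> essentially_surjective F.
Proof. intros [G [_ [eps [eps_iso _]]]] Y. exists (G Y), (eps Y). apply eps_iso. Qed.

Section TensorClosure.
Context {C C' : SemigroupalCategory} (F : SemigroupalFunctor C C')
  (HF : essentially_surjective F) (I : Subcategory C).

Lemma closure_image_ob_tens_l :
  (forall X Y : C, sob I X -> sob I (tens Y X)) ->
  forall X' Y' : C', closure_image_ob F I X' -> closure_image_ob F I (tens Y' X').
Proof.
  intros HIl X' Y' (X & mu & HX & Hmu).
  destruct (HF Y') as (Y & e & He).
  destruct (sf_J_iso F Y X) as [J_inv [HJ1 HJ2]].
  exists (tens Y X), (comp (tensm e mu) J_inv). split.
  - apply HIl, HX.
  - apply iso_comp; [exact (iso_inverse _ _ HJ1 HJ2) | apply tensm_iso; assumption].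
Qed.

Lemma closure_image_ob_tens_r :
  (forall X Y : C, sob I X -> sob I (tens X Y)) ->
  forall X' Y' : C', closure_image_ob F I X' -> closure_image_ob F I (tens X' Y').
Proof.
  intros HIr X' Y' (X & mu & HX & Hmu).
  destruct (HF Y') as (Y & e & He).
  destruct (sf_J_iso F X Y) as [J_inv [HJ1 HJ2]].
  exists (tens X Y), (comp (tensm mu e) J_inv). split.
  - apply HIr, HX.
  - apply iso_comp; [exact (iso_inverse _ _ HJ1 HJ2) | apply tensm_iso; assumption].
Qed.
End TensorClosure.

Lemma ideal_of_kind_closed_under_isos {k} {C : SemigroupalCategory} {I : Subcategory C} :
  is_ideal_of_kind k I -> closed_under_isos I.
Proof. destruct k; simpl; unfold IsIdeal, IsLeftIdeal, IsRightIdeal; tauto. Qed.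

Lemma ideal_of_kind_transfer {k} {C C' : SemigroupalCategory}
  {I : Subcategory C} {S : Subcategory C'} :
  is_ideal_of_kind k I -> closed_under_isos S ->
  ((forall X Y : C, sob I X -> sob I (tens Y X)) ->
   forall X Y : C', sob S X -> sob S (tens Y X)) ->
  ((forall X Y : C, sob I X -> sob I (tens X Y)) ->
   forall X Y : C', sob S X -> sob S (tens X Y)) ->
  is_ideal_of_kind k S.
Proof. destruct k; simpl; unfold IsIdeal, IsLeftIdeal, IsRightIdeal; tauto. Qed.

Theorem lemma2p10 (C C' : SemigroupalCategory) (F : SemigroupalFunctor C C')
  (HF : IsSemigroupalEquivalence F) (k : IdealKind) (I : Subcategory C)
  (HI : is_ideal_of_kind k I) :
  exists S : Subcategory C',
    (forall X', sob S X' <-> closure_image_ob F I X') /\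
    (forall X' Y' (phi' : Hom X' Y'), shom S phi' <-> closure_image_hom F I phi') /\
    is_ideal_of_kind k S /\
    exists H : maps_into F I S, IsEquivalence (restrict H).
Proof.
  destruct (closure_image_equivalence HF (ideal_of_kind_closed_under_isos HI))
    as (S & HSob & HShom & HSiso & HSequiv).
  pose proof (equivalence_essentially_surjective HF) as Hsurj.
  exists S. split; [exact HSob|]. split; [exact HShom|]. split; [|exact HSequiv].
  apply (ideal_of_kind_transfer HI HSiso); intros HIt X' Y' HX';
    apply HSob; apply HSob in HX'.
  - apply closure_image_ob_tens_l; assumption.
  - apply closure_image_ob_tens_r; assumption.
Qed.
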